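(* Let $\mathcal L\in C^1([0,\infty))$ satisfy $\mathcal L'(t)+2b\mathcal L(t)\le c+a\mathcal L^2(t)$ for every $t\ge0$, where $a,b,c>0$ and $\varrho:=\frac{b}{\sqrt{ac}}>1$. There exists a time $t_\varrho>0$ depending only on $\varrho$ such that: if $\mathcal L(0)\le\sqrt{c/a}\,(2\varrho-1)$, then $$\sup_{t\ge t_\varrho/\sqrt{ac}}\mathcal L(t)\le\sqrt{\frac ca}\,\frac{1}{2\varrho-1}.$$ *)

From Stdlib Require Export Reals.
Open Scope R_scope.

Definition has_deriv_nonneg (L Lp : R -> R) (t : R) : Prop :=
  forall eps : R, 0 < eps -> exists delta : R, 0 < delta /\
    forall s : R, 0 <= s -> Rabs (s - t) < delta ->
      Rabs (L s - L t - Lp t * (s - t)) <= eps * Rabs (s - t).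

Definition cont_nonneg (f : R -> R) (t : R) : Prop :=
  forall eps : R, 0 < eps -> exists delta : R, 0 < delta /\
    forall s : R, 0 <= s -> Rabs (s - t) < delta -> Rabs (f s - f t) < eps.

Definition C1_nonneg (L Lp : R -> R) : Prop :=
  forall t : R, 0 <= t -> has_deriv_nonneg L Lp t /\ cont_nonneg Lp t.

From Stdlib Require Import Reals Lra.
Open Scope R_scope.

(* With k = sqrt (c / a) and M = 2 rho - 1 we have c = a k^2 and b = rho a k,
   so the right-hand side c + a L^2 - 2 b L is a k^2 (1 + x^2 - (M + 1) x)
   with x = L / k.  On the band 1/M <= x <= M this quadratic is at most
   -(M - 1) / M^2, so L decreases at a uniform rate while in the band.
   A first-crossing argument then shows that L stays below a line falling
   from k M to k / M, and once below k / M it can never cross back. *)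

Lemma has_deriv_nonneg_cont (h hp : R -> R) (t : R) :
  has_deriv_nonneg h hp t -> cont_nonneg h t.
Proof.
  intros Hd eps Heps.
  destruct (Hd 1 Rlt_0_1) as [d [Hd0 Hs]].
  set (K := Rabs (hp t) + 1).
  assert (HK : 0 < K) by (unfold K; pose proof (Rabs_pos (hp t)); lra).
  exists (Rmin d (eps / K)); split.
  { apply Rmin_pos; [lra | apply Rdiv_lt_0_compat; lra]. }
  intros s Hs0 Hst.
  pose proof (Rmin_l d (eps / K)); pose proof (Rmin_r d (eps / K)).
  specialize (Hs s Hs0 ltac:(lra)).
  assert (Hsmall : K * Rabs (s - t) < eps).
  { replace eps with (K * (eps / K)) by (field; lra).
    apply Rmult_lt_compat_l; lra. }
  replace (h s - h t) with ((h s - h t - hp t * (s - t)) + hp t * (s - t)) by ring.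
  eapply Rle_lt_trans; [apply Rabs_triang |].
  rewrite Rabs_mult. unfold K in Hsmall. lra.
Qed.

Lemma has_deriv_nonneg_nonpos_right (f f' : R -> R) (t : R) :
  0 <= t -> has_deriv_nonneg f f' t ->
  f t <= 0 -> (f t = 0 -> f' t < 0) ->
  exists eta, 0 < eta /\ forall s, t <= s < t + eta -> f s <= 0.
Proof.
  intros Ht Hd Hf Hcross.
  destruct (Req_dec (f t) 0) as [Hzero | Hnonzero].
  - specialize (Hcross Hzero).
    destruct (Hd (- f' t) ltac:(lra)) as [d [Hd0 Hs]].
    exists d; split; [exact Hd0 |]. intros s Hst.
    specialize (Hs s ltac:(lra) ltac:(rewrite Rabs_pos_eq; lra)).
    rewrite (Rabs_pos_eq (s - t)) in Hs by lra.
    pose proof (Rle_abs (f s - f t - f' t * (s - t))). lra.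
  - destruct (has_deriv_nonneg_cont f f' t Hd (- f t) ltac:(lra)) as [d [Hd0 Hs]].
    exists d; split; [exact Hd0 |]. intros s Hst.
    specialize (Hs s ltac:(lra) ltac:(rewrite Rabs_pos_eq; lra)).
    apply Rabs_def2 in Hs. lra.
Qed.

Lemma cont_nonneg_nonpos_left (f : R -> R) (t0 t : R) :
  0 <= t0 < t -> cont_nonneg f t ->
  (forall u, t0 <= u < t -> f u <= 0) -> f t <= 0.
Proof.
  intros Ht Hc Hbelow.
  destruct (Rle_or_lt (f t) 0) as [| Hpos]; [assumption | exfalso].
  destruct (Hc (f t) Hpos) as [d [Hd0 Hs]].
  set (u := Rmax t0 (t - d / 2)).
  assert (Hu : t0 <= u < t /\ t - d < u).
  { unfold u; destruct (Rle_dec t0 (t - d / 2));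
      [rewrite Rmax_right by lra | rewrite Rmax_left by lra]; lra. }
  specialize (Hs u ltac:(lra) ltac:(rewrite Rabs_left1; lra)).
  apply Rabs_def2 in Hs. specialize (Hbelow u ltac:(lra)). lra.
Qed.

(* Let [m] be the supremum of the times up to which [f <= 0] holds throughout.
   Continuity rules out [f m > 0]; if [f m <= 0], then continuity (when
   [f m < 0]) or the crossing hypothesis (when [f m = 0]) keeps [f <= 0]
   a little beyond [m]. *)
Lemma has_deriv_nonneg_barrier (f f' : R -> R) (t0 t1 : R) :
  0 <= t0 ->
  (forall t, t0 <= t <= t1 -> has_deriv_nonneg f f' t) ->
  f t0 <= 0 ->
  (forall t, t0 <= t <= t1 -> f t = 0 -> f' t < 0) ->
  forall t, t0 <= t <= t1 -> f t <= 0.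
Proof.
  intros Ht0 Hd Hf0 Hcross t2 Ht2.
  destruct (Rle_or_lt (f t2) 0) as [| Hpos]; [assumption | exfalso].
  set (E := fun s => t0 <= s <= t2 /\ forall u, t0 <= u <= s -> f u <= 0).
  destruct (completeness E) as [m [Hub Hlub]].
  { exists t2; intros s [Hs _]; lra. }
  { exists t0; split; [lra |]. intros u Hu. replace u with t0 by lra. exact Hf0. }
  assert (Hm0 : t0 <= m).
  { apply Hub; split; [lra |]. intros u Hu. replace u with t0 by lra. exact Hf0. }
  assert (Hm2 : m <= t2) by (apply Hlub; intros s [Hs _]; lra).
  assert (Hbelow : forall u, t0 <= u < m -> f u <= 0).
  { intros u Hu. destruct (Rle_or_lt (f u) 0) as [| Hu']; [assumption | exfalso].
    assert (m <= u); [| lra].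
    apply Hlub; intros s [_ Hall].
    destruct (Rle_or_lt s u); [assumption |].
    specialize (Hall u ltac:(lra)). lra. }
  assert (Hfm : f m <= 0).
  { destruct (Req_dec t0 m) as [<- | Hne]; [exact Hf0 |].
    apply (cont_nonneg_nonpos_left f t0 m); [lra | | exact Hbelow].
    exact (has_deriv_nonneg_cont f f' m (Hd m ltac:(lra))). }
  assert (Hmt2 : m < t2) by (destruct (Req_dec m t2); [subst; lra | lra]).
  destruct (has_deriv_nonneg_nonpos_right f f' m ltac:(lra) (Hd m ltac:(lra)) Hfm
              (Hcross m ltac:(lra))) as [eta [Heta Hright]].
  set (s := Rmin (m + eta / 2) t2).
  assert (Hs : m < s <= t2 /\ s < m + eta).
  { unfold s; destruct (Rle_dec (m + eta / 2) t2);
      [rewrite Rmin_left by lra | rewrite Rmin_right by lra]; lra. }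
  assert (s <= m); [| lra].
  apply Hub; split; [lra |]. intros u Hu.
  destruct (Rlt_le_dec u m); [apply Hbelow | apply Hright]; lra.
Qed.

Lemma has_deriv_nonneg_below_line (h hp : R -> R) (al be t0 t1 : R) :
  0 <= t0 ->
  (forall t, t0 <= t <= t1 -> has_deriv_nonneg h hp t) ->
  h t0 <= al - be * t0 ->
  (forall t, t0 <= t <= t1 -> h t = al - be * t -> hp t < - be) ->
  forall t, t0 <= t <= t1 -> h t <= al - be * t.
Proof.
  intros Ht0 Hd H0 Hcross t Ht.
  enough (h t - (al - be * t) <= 0) by lra.
  apply (has_deriv_nonneg_barrier (fun s => h s - (al - be * s)) (fun s => hp s + be) t0 t1);
    try assumption; try lra.
  - intros s Hs eps Heps.
    destruct (Hd s Hs eps Heps) as [d [Hd0 Hu]].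
    exists d; split; [exact Hd0 |]. intros u Hu0 Hus.
    replace (h u - (al - be * u) - (h s - (al - be * s)) - (hp s + be) * (u - s))
      with (h u - h s - hp s * (u - s)) by ring.
    exact (Hu u Hu0 Hus).
  - intros s Hs Heq. specialize (Hcross s Hs ltac:(lra)). lra.
Qed.

Lemma has_deriv_nonneg_enters_below (h hp : R -> R) (lo hi delta : R) :
  lo <= hi -> 0 < delta ->
  (forall t, 0 <= t -> has_deriv_nonneg h hp t) ->
  (forall t, 0 <= t -> lo <= h t <= hi -> hp t <= - delta) ->
  h 0 <= hi ->
  forall t, 2 * (hi - lo) / delta <= t -> h t <= lo.
Proof.
  intros Hlh Hdelta Hd Hband H0 t Ht.
  set (T := 2 * (hi - lo) / delta) in *.
  assert (HT : 0 <= T) by (unfold T; apply Rmult_le_pos; [lra | left; apply Rinv_0_lt_compat; lra]).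
  assert (Hline : hi - delta / 2 * T = lo) by (unfold T; field; lra).
  assert (HhT : h T <= lo).
  { rewrite <- Hline.
    apply (has_deriv_nonneg_below_line h hp hi (delta / 2) 0 T); try lra.
    - intros u Hu; apply Hd; lra.
    - intros u Hu Heq.
      assert (delta / 2 * u <= delta / 2 * T) by (apply Rmult_le_compat_l; lra).
      assert (0 <= delta / 2 * u) by (apply Rmult_le_pos; lra).
      assert (hp u <= - delta) by (apply Hband; lra). lra. }
  replace lo with (lo - 0 * t) by ring.
  apply (has_deriv_nonneg_below_line h hp lo 0 T t); try lra.
  - intros u Hu; apply Hd; lra.
  - intros u Hu Heq.
    assert (hp u <= - delta) by (apply Hband; lra). lra.
Qed.

(* [1 + x^2 - (M + 1) x = (x - 1/M) (x - M) - (M - 1) x / M]. *)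
Lemma quadratic_le_on_band (M x : R) :
  1 <= M -> / M <= x <= M ->
  1 + x ^ 2 - (M + 1) * x <= - ((M - 1) / M ^ 2).
Proof.
  intros HM Hx.
  assert (Hm : 0 < / M) by (apply Rinv_0_lt_compat; lra).
  assert (Hid : 1 + x ^ 2 - (M + 1) * x = (x - / M) * (x - M) - (M - 1) * / M * x)
    by (field; lra).
  assert (Hprod : (x - / M) * (x - M) <= 0)
    by (assert (0 <= x - / M) by lra; assert (x - M <= 0) by lra; nra).
  assert (Hlin : (M - 1) * / M * / M <= (M - 1) * / M * x)
    by (apply Rmult_le_compat_l; [apply Rmult_le_pos |]; lra).
  replace ((M - 1) / M ^ 2) with ((M - 1) * / M * / M) by (field; lra).
  lra.
Qed.

Lemma scaled_quadratic_le_on_band (a k M y : R) :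
  0 < a -> 0 < k -> 1 <= M -> k * / M <= y <= k * M ->
  a * k ^ 2 + a * y ^ 2 - (M + 1) * (a * k) * y <= - (a * k ^ 2 * ((M - 1) / M ^ 2)).
Proof.
  intros Ha Hk HM Hy.
  assert (Hyk : k * (y / k) = y) by (field; lra).
  assert (Hx : / M <= y / k <= M) by (split; apply (Rmult_le_reg_l k); lra).
  pose proof (quadratic_le_on_band M (y / k) HM Hx) as Hq.
  replace (a * k ^ 2 + a * y ^ 2 - (M + 1) * (a * k) * y)
    with (a * k ^ 2 * (1 + (y / k) ^ 2 - (M + 1) * (y / k))) by (field; lra).
  replace (- (a * k ^ 2 * ((M - 1) / M ^ 2)))
    with (a * k ^ 2 * - ((M - 1) / M ^ 2)) by ring.
  apply Rmult_le_compat_l; [| exact Hq].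
  apply Rmult_le_pos; [lra | apply pow_le; lra].
Qed.

Theorem lemma5p2 :
  forall rho : R, 1 < rho ->
  exists t_rho : R, 0 < t_rho /\
    forall (a b c : R) (L Lp : R -> R),
      0 < a -> 0 < b -> 0 < c ->
      b / sqrt (a * c) = rho ->
      C1_nonneg L Lp ->
      (forall t : R, 0 <= t -> Lp t + 2 * b * L t <= c + a * (L t) ^ 2) ->
      L 0 <= sqrt (c / a) * (2 * rho - 1) ->
      forall t : R, t_rho / sqrt (a * c) <= t ->
        L t <= sqrt (c / a) * / (2 * rho - 1).
Proof.
  intros rho Hrho.
  set (M := 2 * rho - 1).
  set (d := (M - 1) / M ^ 2).
  assert (HM : 1 < M) by (unfold M; lra).
  assert (Hd : 0 < d) by (unfold d; apply Rdiv_lt_0_compat; [lra | apply pow_lt; lra]).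
  assert (HmM : / M < M).
  { enough (/ M < / 1) by (rewrite Rinv_1 in *; lra).
    apply Rinv_lt_contravar; lra. }
  exists (2 * (M - / M) / d); split.
  { apply Rdiv_lt_0_compat; lra. }
  intros a b c L Lp Ha _ Hc Hb_rho HC1 Hric HL0 t Ht.
  set (k := sqrt (c / a)) in *.
  assert (Hca : 0 < c / a) by (apply Rdiv_lt_0_compat; lra).
  assert (Hk : 0 < k) by (apply sqrt_lt_R0; exact Hca).
  assert (Hc_k : c = a * k ^ 2)
    by (unfold k; rewrite <- Rsqr_pow2, Rsqr_sqrt by lra; field; lra).
  assert (Hs : sqrt (a * c) = a * k).
  { rewrite Hc_k, <- sqrt_square with (x := a * k) by (apply Rmult_le_pos; lra).
    f_equal; ring. }
  assert (Hb_k : b = rho * (a * k)) by (rewrite <- Hb_rho, Hs; field; lra).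
  apply (has_deriv_nonneg_enters_below L Lp (k * / M) (k * M) (a * k ^ 2 * d)).
  - apply Rmult_le_compat_l; lra.
  - apply Rmult_lt_0_compat; [apply Rmult_lt_0_compat; [lra | apply pow_lt; lra] | lra].
  - intros u Hu; apply (HC1 u Hu).
  - intros u Hu Hband.
    pose proof (Hric u Hu) as Hric_u. rewrite Hb_k, Hc_k in Hric_u.
    pose proof (scaled_quadratic_le_on_band a k M (L u) Ha Hk ltac:(lra) Hband) as Hquad.
    replace (M + 1) with (2 * rho) in Hquad by (unfold M; ring).
    fold d in Hquad. lra.
  - exact HL0.
  - rewrite Hs in Ht. eapply Rle_trans; [right | exact Ht]. field. lra.
Qed.
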